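(* Let $\mathtt{InpEqSize}=\{(G,\mathbf{x}): \mathbf{x}(v)=|V(G)|\ \text{for every } v\in V(G)\}$, where $\mathbf{x}(v)$ is the binary encoding of an integer. Then $\mathtt{InpEqSize}\notin\mathrm{NLD}(t)$ for every time bound $t=o(n)$.
   Context: Configurations are pairs $(G,\mathbf{x})$ with $G$ a finite connected graph and $\mathbf{x}:V(G)\to\{0,1\}^*$. A distributed language is a decidable set of configurations. Model: synchronous LOCAL model. Nodes have distinct identities given by an injective $\mathrm{Id}:V(G)\to\mathbb{N}$ and unbounded messages. After $r$ rounds a node knows exactly its radius-$r$ ball (identities, inputs, certificates, adjacencies). A time bound $t$ is a function of $(G,\mathbf{x},\mathrm{Id})$, non-decreasing under taking connected induced subgraphs with restricted inputs and identities. $t=o(n)$ means $t(G,\mathbf{x},\mathrm{Id})\le g(|V(G)|)$ for some $g$ with $g(n)/n\to0$. A verification algorithm receives, besides $(G,\mathbf{x})$ and $\mathrm{Id}$, a certificate $\mathbf{y}(v)\in\{0,1\}^*$ at each node. It verifies $\mathcal{L}$ if: - for every $(G,\mathbf{x})\in\mathcal{L}$ there is a certificate $\mathbf{y}$ (depending only on $(G,\mathbf{x})$) such that for every identity assignment all nodes output ''yes''; - for every $(G,\mathbf{x})\notin\mathcal{L}$, for every certificate and every identity assignment, some node outputs ''no''. $\mathrm{NLD}(t)$ is the class of languages verifiable by a verification algorithm running in time $t$. *)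

From mathcomp Require Import all_boot.
Set Implicit Arguments.
Unset Strict Implicit.
Unset Printing Implicit Defensive.

Fixpoint binrev (fuel n : nat) : seq bool :=
  match fuel with
  | 0 => [::]
  | k.+1 => if n == 0 then [::] else odd n :: binrev k n./2
  end.
Definition bin (n : nat) : seq bool :=
  if n == 0 then [:: false] else rev (binrev n n).

Definition conn_graph (T : finType) (e : rel T) : Prop :=
  [/\ 0 < #|T|, symmetric e, irreflexive e & forall u v, connect e u v].

(* reach e r v u : u lies in the radius-r ball around v *)
Fixpoint reach (T : finType) (e : rel T) (r : nat) (v u : T) : bool :=
  match r with
  | 0 => u == v
  | r'.+1 => reach e r' v u || [exists w, reach e r' v w && e w u]
  end.

Definition input (T : Type) := T -> seq bool.   (* inputs x and certificates y *)
Definition ident (T : Type) := T -> nat.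

(* ---------- Views: after r rounds a node knows exactly its radius-r ball
   (identities, inputs, certificates, adjacencies).  Two nodes have the same
   radius-r view iff there is an identity-preserving isomorphism between their
   labelled radius-r balls (induced subgraphs) mapping centre to centre.  Since
   identities are injective this isomorphism is determined by the identities. *)
Definition same_view (r : nat)
    (T1 : finType) (e1 : rel T1) (x1 y1 : input T1) (Id1 : ident T1) (v1 : T1)
    (T2 : finType) (e2 : rel T2) (x2 y2 : input T2) (Id2 : ident T2) (v2 : T2) : Prop :=
  [/\ Id1 v1 = Id2 v2,
      (forall u1, reach e1 r v1 u1 -> exists2 u2, reach e2 r v2 u2 & Id2 u2 = Id1 u1),
      (forall u2, reach e2 r v2 u2 -> exists2 u1, reach e1 r v1 u1 & Id1 u1 = Id2 u2),
      (forall u1 u2, reach e1 r v1 u1 -> reach e2 r v2 u2 -> Id1 u1 = Id2 u2 ->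
          x1 u1 = x2 u2 /\ y1 u1 = y2 u2)
    & (forall u1 w1 u2 w2, reach e1 r v1 u1 -> reach e1 r v1 w1 ->
          reach e2 r v2 u2 -> reach e2 r v2 w2 ->
          Id1 u1 = Id2 u2 -> Id1 w1 = Id2 w2 -> e1 u1 w1 = e2 u2 w2)].

Definition language := forall (T : finType), rel T -> input T -> Prop.

Definition valgo :=
  forall (T : finType), rel T -> input T -> input T -> ident T -> T -> bool.

Definition tbound := forall (T : finType), rel T -> input T -> ident T -> nat.

Definition tb_monotone (t : tbound) : Prop :=
  forall (T : finType) (e : rel T) (x : input T) (Id : ident T)
         (S : finType) (h : S -> T),
    conn_graph e -> injective Id -> injective h ->
    conn_graph (fun a b => e (h a) (h b)) ->
    t S (fun a b => e (h a) (h b)) (x \o h) (Id \o h) <= t T e x Id.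

Definition tb_little_o (t : tbound) : Prop :=
  exists g : nat -> nat,
    (forall k, 0 < k -> exists N, forall n, N <= n -> k * g n <= n) /\
    (forall (T : finType) (e : rel T) (x : input T) (Id : ident T),
        conn_graph e -> injective Id -> t T e x Id <= g #|T|).

Definition runs_in (A : valgo) (t : tbound) : Prop :=
  forall (T1 : finType) (e1 : rel T1) (x1 y1 : input T1) (Id1 : ident T1) (v1 : T1)
         (T2 : finType) (e2 : rel T2) (x2 y2 : input T2) (Id2 : ident T2) (v2 : T2),
    conn_graph e1 -> injective Id1 -> conn_graph e2 -> injective Id2 ->
    same_view (t T1 e1 x1 Id1) e1 x1 y1 Id1 v1 e2 x2 y2 Id2 v2 ->
    A T1 e1 x1 y1 Id1 v1 = A T2 e2 x2 y2 Id2 v2.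

Definition verifies (A : valgo) (L : language) : Prop :=
  (forall (T : finType) (e : rel T) (x : input T),
      conn_graph e -> L T e x ->
      exists y : input T, forall Id : ident T, injective Id -> forall v, A T e x y Id v) /\
  (forall (T : finType) (e : rel T) (x : input T),
      conn_graph e -> ~ L T e x ->
      forall (y : input T) (Id : ident T), injective Id -> exists v, ~~ A T e x y Id v).

Definition NLD (t : tbound) (L : language) : Prop :=
  exists A : valgo, runs_in A t /\ verifies A L.

Definition InpEqSize : language :=
  fun T e x => forall v : T, x v = bin #|T|.

From mathcomp Require Import all_boot zify.
Set Implicit Arguments.
Unset Strict Implicit.
Unset Printing Implicit Defensive.

(* The odd cycle C_n with every input equal to bin n is in InpEqSize, while its
   double cover C_2n with the same inputs is not, since n and 2n have different
   parities.  Give C_2n the certificates pulled back from an accepting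
   certificate of C_n.  Whatever the identities of C_n, the running time there
   is at most R = g(n), and as long as 2(R + 1) < n the covering map is an
   isomorphism on every radius-R ball of C_2n.  So we may pull back the
   identities of the ball around the rejecting node of C_2n to identities of
   C_n, and that node then has the same view as an accepting node of C_n.
   Since g = o(n), a large enough odd n gives the contradiction. *)

Section Reach.

Variables (T : finType) (e : rel T).

Lemma reach_step r v w u : reach e r v w -> e w u -> reach e r.+1 v u.
Proof. by move=> hw hu; apply/orP; right; apply/existsP; exists w; apply/andP. Qed.

Lemma reach_mono r s v u : r <= s -> reach e r v u -> reach e s v u.
Proof.
elim: s => [|s IH]; first by rewrite leqn0 => /eqP ->.
by rewrite leq_eqVlt ltnS => /predU1P [-> //|/IH hrs /hrs /= ->].
Qed.

Lemma reach_refl r v : reach e r v v.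
Proof. by apply: (reach_mono (leq0n r)); rewrite /= eqxx. Qed.

Lemma reach_trans r s v w u :
  reach e r v w -> reach e s w u -> reach e (r + s) v u.
Proof.
move=> hvw; elim: s u => [|s IH] u /=; first by rewrite addn0 => /eqP ->.
case/orP => [/IH /(reach_mono (leqnSn _)) | /existsP [z /andP [/IH hz hzu]]].
  by rewrite addnS.
by rewrite addnS (reach_step hz hzu).
Qed.

Lemma reach_sym : symmetric e -> forall r v u, reach e r v u -> reach e r u v.
Proof.
move=> e_sym; elim=> [|r IH] v u; first by rewrite /= eq_sym.
case/orP => [/IH /(reach_mono (leqnSn _)) //| /existsP [w /andP [/IH hwv hwu]]].
rewrite -add1n; apply: reach_trans hwv; apply: (@reach_step 0 _ u).
  exact: reach_refl.
by rewrite e_sym.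
Qed.

End Reach.

Lemma reach_map (T1 T2 : finType) (e1 : rel T1) (e2 : rel T2) (p : T2 -> T1) :
    (forall a b, e2 a b -> e1 (p a) (p b)) ->
  forall r v u, reach e2 r v u -> reach e1 r (p v) (p u).
Proof.
move=> hp; elim=> [|r IH] v u /=; first by move/eqP ->.
case/orP => [/IH -> // | /existsP [w /andP [/IH hw /hp hwu]]].
exact: (reach_step hw hwu).
Qed.

Definition sym_frel (T : eqType) (f : T -> T) : rel T :=
  fun a b => (f a == b) || (f b == a).

Definition no_cycle_upto (T : eqType) (f : T -> T) (l : nat) : Prop :=
  forall d x, 0 < d <= l -> iter d f x != x.

Section FunctionalGraph.

Variables (T : finType) (f : T -> T).

Lemma sym_frel_sym : symmetric (sym_frel f).
Proof. by move=> a b; rewrite /sym_frel orbC. Qed.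

Lemma connect_iter k u : connect (sym_frel f) u (iter k f u).
Proof.
elim: k => [|k IH]; first exact: connect0.
by apply: connect_trans IH (connect1 _); rewrite /sym_frel eqxx.
Qed.

Lemma reach_sym_frel_iter (f_inj : injective f) r v u :
  reach (sym_frel f) r v u ->
  exists2 k, k <= r & u = iter k f v \/ v = iter k f u.
Proof.
elim: r u => [|r IH] u /=; first by move/eqP ->; exists 0 => //; left.
case/orP => [/IH [k kr huv] | /existsP [w /andP [/IH [k kr hwv] /orP [] /eqP hwu]]].
- by exists k => //; apply: leqW.
- case: hwv => [hw | hv]; first by exists k.+1 => //; left; rewrite -hwu hw.
  case: k kr hv => [|k] kr hv; first by exists 1 => //; left; rewrite -hwu hv.
  by exists k; [lia | right; rewrite hv iterSr hwu].
- case: hwv => [hw | hv]; last by exists k.+1 => //; right; rewrite hv -hwu iterSr.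
  case: k kr hw => [|k] kr hw; first by exists 1 => //; right; rewrite /= hwu hw.
  by exists k; [lia | left; apply: f_inj; rewrite hwu hw].
Qed.

End FunctionalGraph.

Section Cover.

Variables (T1 T2 : finType) (f1 : T1 -> T1) (f2 : T2 -> T2) (p : T2 -> T1).
Hypothesis pf : forall a, p (f2 a) = f1 (p a).

Lemma iter_cover k a : p (iter k f2 a) = iter k f1 (p a).
Proof. by elim: k => [|k IH] //=; rewrite pf IH. Qed.

Lemma cover_edge a b : sym_frel f2 a b -> sym_frel f1 (p a) (p b).
Proof. by case/orP => /eqP <-; rewrite /sym_frel pf eqxx ?orbT. Qed.

Lemma lift_reach (g2 : T2 -> T2) :
    cancel g2 f2 -> injective f1 ->
  forall r v u1, reach (sym_frel f1) r (p v) u1 ->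
  exists2 u2, reach (sym_frel f2) r v u2 & p u2 = u1.
Proof.
move=> g2K f1_inj; elim=> [|r IH] v u1 /=; first by move/eqP ->; exists v => //=.
case/orP => [/IH [u2 hu2 <-] | /existsP [w1 /andP [/IH [w2 hw2 <-] /orP []/eqP hu1]]].
- by exists u2 => //; apply: (reach_mono (leqnSn r)).
- exists (f2 w2); last by rewrite pf.
  by apply: (reach_step hw2); rewrite /sym_frel eqxx.
- exists (g2 w2); last by apply: f1_inj; rewrite -pf g2K.
  by apply: (reach_step hw2); rewrite /sym_frel g2K eqxx orbT.
Qed.

Hypothesis f2_inj : injective f2.

Lemma cover_inj_ball s v u w :
    no_cycle_upto f1 s.*2 ->
    reach (sym_frel f2) s v u -> reach (sym_frel f2) s v w ->
  p u = p w -> u = w.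
Proof.
move=> short hu hw puw.
have := reach_trans (reach_sym (@sym_frel_sym _ f2) hu) hw.
case/(reach_sym_frel_iter f2_inj) => -[_ [] // | k kle [] huw].
- by have := short k.+1 (p u); rewrite -iter_cover -huw puw eqxx -addnn => /(_ kle).
- by have := short k.+1 (p w); rewrite -iter_cover -huw puw eqxx -addnn => /(_ kle).
Qed.

Lemma cover_edge_ball s v a b :
    no_cycle_upto f1 s.+1.*2 ->
    reach (sym_frel f2) s v a -> reach (sym_frel f2) s v b ->
  sym_frel f1 (p a) (p b) = sym_frel f2 a b.
Proof.
move=> short ha hb; apply/idP/idP; last exact: cover_edge.
have ball_succ c : reach (sym_frel f2) s v c -> reach (sym_frel f2) s.+1 v (f2 c).
  by move=> hc; apply: (reach_step hc); rewrite /sym_frel eqxx.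
have ball_mono c : reach (sym_frel f2) s v c -> reach (sym_frel f2) s.+1 v c.
  exact: reach_mono.
case/orP => /eqP; rewrite -pf.
- by move/(cover_inj_ball short (ball_succ _ ha) (ball_mono _ hb)) <-;
    rewrite /sym_frel eqxx.
- by move/(cover_inj_ball short (ball_succ _ hb) (ball_mono _ ha)) <-;
    rewrite /sym_frel eqxx orbT.
Qed.

End Cover.

Lemma same_view_cover (T1 T2 : finType) (e1 : rel T1) (e2 : rel T2)
    (x1 y1 : input T1) (Id1 : ident T1) (Id2 : ident T2) (p : T2 -> T1) r v2 :
    injective Id2 ->
    (forall u, reach e2 r v2 u -> reach e1 r (p v2) (p u)) ->
    (forall u1, reach e1 r (p v2) u1 -> exists2 u2, reach e2 r v2 u2 & p u2 = u1) ->
    (forall a b, reach e2 r v2 a -> reach e2 r v2 b -> e1 (p a) (p b) = e2 a b) ->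
    (forall u, reach e2 r v2 u -> Id1 (p u) = Id2 u) ->
  same_view r e1 x1 y1 Id1 (p v2) e2 (x1 \o p) (y1 \o p) Id2 v2.
Proof.
move=> Id2_inj hmap hlift hedge hId.
have ball_id u1 u2 : reach e1 r (p v2) u1 -> reach e2 r v2 u2 ->
    Id1 u1 = Id2 u2 -> u1 = p u2.
  by move=> /hlift [u2' hu2' <-] hu2; rewrite hId // => /Id2_inj ->.
split.
- exact/hId/reach_refl.
- by move=> u1 /hlift [u2 hu2 <-]; exists u2; rewrite ?hId.
- by move=> u2 hu2; exists (p u2); rewrite ?hId ?hmap.
- by move=> u1 u2 hu1 hu2 /(ball_id _ _ hu1 hu2) ->.
- move=> u1 w1 u2 w2 hu1 hw1 hu2 hw2.
  by move=> /(ball_id _ _ hu1 hu2) -> /(ball_id _ _ hw1 hw2) ->; apply: hedge.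
Qed.

(* Read the identities off a section of p that lifts p(B) back into B. *)
Lemma lift_ident (T1 T2 : finType) (p : T2 -> T1) (s : T1 -> T2) (B : pred T2)
    (Id2 : ident T2) :
    cancel s p -> injective Id2 ->
    (forall u w, B u -> B w -> p u = p w -> u = w) ->
  exists2 Id1 : ident T1, injective Id1 & forall u, B u -> Id1 (p u) = Id2 u.
Proof.
move=> sK Id2_inj p_inj.
pose L j := odflt (s j) [pick u | B u & p u == j].
have LK : cancel L p.
  by move=> j; rewrite /L; case: pickP => [u /andP [_ /eqP] | _] //=; apply: sK.
exists (Id2 \o L) => [a b /Id2_inj /(congr1 p) | u hu /=]; rewrite ?LK //.
rewrite /L; case: pickP => [w /andP [hw /eqP /p_inj ->] // | /(_ u)].
by rewrite hu eqxx.
Qed.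

Definition cycle_graph (n : nat) : rel 'I_n := sym_frel (@ordS n).
Arguments cycle_graph : clear implicits.

Lemma iter_ordS n k (i : 'I_n) : iter k (@ordS n) i = (i + k) %% n :> nat.
Proof.
elim: k => [|k IH] /=; first by rewrite addn0 modn_small.
by rewrite IH -addn1 modnDml -addnA addn1.
Qed.

Lemma no_cycle_ordS n l : l < n -> no_cycle_upto (@ordS n) l.
Proof.
move=> ln d x /andP [d_gt0 dl]; apply/eqP => /(congr1 (@nat_of_ord _)).
rewrite iter_ordS -{2}(modn_small (ltn_ord x)) -[X in _ = X %% n]addn0 => /eqP.
by rewrite eqn_modDl mod0n modn_small; lia.
Qed.

Lemma cycle_graph_conn n : 1 < n -> conn_graph (cycle_graph n).
Proof.
move=> n_gt1; split.
- by rewrite card_ord; lia.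
- exact: sym_frel_sym.
- move=> a; rewrite /cycle_graph /sym_frel orbb.
  by apply/negbTE; apply: (no_cycle_ordS n_gt1 (d := 1)).
- move=> u v; have -> : v = iter (v + n - u) (@ordS n) u.
    apply: ord_inj; rewrite iter_ordS.
    have -> : u + (v + n - u) = v + n by have := ltn_ord u; lia.
    by rewrite modnDr modn_small.
  exact: connect_iter.
Qed.

Definition ord_mod n m (i : 'I_m) : 'I_n.+1 := Ordinal (ltn_pmod i (ltn0Sn n)).

Lemma ord_modS n m (i : 'I_m) :
  n.+1 %| m -> ord_mod n (ordS i) = ordS (ord_mod n i).
Proof.
move=> dvd_nm; apply: ord_inj => /=.
by rewrite modn_dvdm // -[(i %% n.+1).+1]addn1 modnDml addn1.
Qed.

Lemma ord_modK n m (le_nm : n.+1 <= m) : cancel (widen_ord le_nm) (@ord_mod n m).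
Proof. by move=> i; apply: ord_inj; rewrite /= modn_small. Qed.

Lemma bin_last n : 0 < n -> last false (bin n) = odd n.
Proof. by case: n => [|n] // _; rewrite /bin /= rev_cons last_rcons. Qed.

Theorem theorem3 (t : tbound) :
  tb_monotone t -> tb_little_o t -> ~ NLD t InpEqSize.
Proof.
move=> _ [g [g_small t_le_g]] [A [A_local [A_complete A_sound]]].
have [N0 g_le] := g_small 4 isT.
set k := (maxn N0 5).*2; set n := k.+1.
have le_n2n : n <= n * 2 by lia.
pose p := @ord_mod k (n * 2).
have pS : forall i, p (ordS i) = ordS (p i) by move=> i; apply/ord_modS/dvdn_mulr.
have conn1 : conn_graph (cycle_graph n) by apply: cycle_graph_conn; lia.
have conn2 : conn_graph (cycle_graph (n * 2)) by apply: cycle_graph_conn; lia.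
pose x1 : input 'I_n := fun _ => bin n.
have [y y_accepted] : exists y : input 'I_n,
    forall Id, injective Id -> forall v, A _ (cycle_graph n) x1 y Id v.
  by apply: A_complete conn1 _ => v; rewrite card_ord.
have not_in_L : ~ InpEqSize (cycle_graph (n * 2)) (x1 \o p).
  move=> /(_ ord0); rewrite card_ord /= => /(congr1 (last false)).
  by rewrite !bin_last // ?oddM ?andbF /n /= odd_double.
have [v2 v2_rejects] := A_sound _ _ _ conn2 not_in_L (y \o p) _ (@ord_inj _).
set R := g n; have hR : 4 * R <= n by apply: g_le; lia.
have short : no_cycle_upto (@ordS n) R.*2 by apply: no_cycle_ordS; lia.
have [Id1 Id1_inj Id1_lift] := lift_ident (ord_modK le_n2n) (@ord_inj _)
  (fun u w => cover_inj_ball pS (@ordS_inj _) short (v := v2) (u := u) (w := w)).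
have hr : t _ (cycle_graph n) x1 Id1 <= R.
  by have := t_le_g _ _ x1 Id1 conn1 Id1_inj; rewrite card_ord.
move/negP: v2_rejects; apply.
rewrite -(A_local _ _ x1 y Id1 (p v2) _ _ _ _ _ v2 conn1 Id1_inj conn2 (@ord_inj _)).
  exact: y_accepted.
apply: same_view_cover => [||||u /(reach_mono hr)/Id1_lift //].
- exact: ord_inj.
- exact/reach_map/(cover_edge pS).
- by move=> u1 /(lift_reach pS (@ord_predK _) (@ordS_inj _)).
- move=> a b; apply: (cover_edge_ball pS (@ordS_inj _)).
  by apply: no_cycle_ordS; lia.
Qed.
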